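(* In the standing setup below, assume that the restriction of $h$ to $\Omega$ is one-to-one and $0\notin h(\Omega)$. Let $\gamma\in F$ be such that there is a non-zero vector $v\in\mathcal K_\infty(B,x)$ with $Bv=h(\gamma)v$ and $Av\neq0$. Then $\gamma$ is observable.
   Context: Standing setup. Let $\mathbb G$ be a locally compact abelian group (written additively) with Haar measure $dg$ and Pontryagin dual $\widehat{\mathbb G}$ (the group of continuous unitary characters $\gamma:\mathbb G\to\mathbb T$). A weight is a measurable, locally bounded, even function $w:\mathbb G\to[1,\infty)$ with $w(g_1+g_2)\le w(g_1)w(g_2)$ for all $g_1,g_2$; it is assumed to satisfy the Beurling–Domar condition $\sum_{n=0}^\infty \frac{\ln w(ng)}{1+n^2}<\infty$ for all $g\in\mathbb G$, where $ng=g+\dots+g$ ($n$ times). $L_w(\mathbb G)$ is the Banach algebra of functions $f$ with $\|f\|_w=\int_{\mathbb G}|f(g)|w(g)\,dg<\infty$, with convolution as multiplication, and $\hat f(\gamma)=\int_{\mathbb G}f(g)\gamma(-g)\,dg$. Let $\mathcal X$ be a complex Banach space and $\mathcal T:\mathbb G\to B(\mathcal X)$ a strongly continuous group representation with $\|\mathcal T(g)\|\le w(g)$ for all $g$. $\mathcal X$ is an $L_w(\mathbb G)$-module via $fx=\int_{\mathbb G}f(g)\mathcal T(-g)x\,dg$, assumed non-degenerate ($fx=0$ for all $f$ implies $x=0$). The Beurling spectrum of $N\subseteq\mathcal X$ is $\Lambda(N)=\{\gamma\in\widehat{\mathbb G}:$ for every $f\in L_w(\mathbb G)$ with $\hat f(\gamma)\ne0$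 there is $x\in N$ with $fx\neq0\}$; $\Lambda(x):=\Lambda(\{x\})$. For closed $F\subseteq\widehat{\mathbb G}$, $\mathcal X(F)=\{x\in\mathcal X:\Lambda(x)\subseteq F\}$ and $\mathcal X_\gamma:=\mathcal X(\{\gamma\})$. Fixed data: a set $\Omega\subseteq\widehat{\mathbb G}$ and integers $M,\kappa\ge1$ such that for every $\gamma\in\Omega$, $\mathcal X_\gamma$ has finite dimension $m_\gamma\le M$, with a basis $x_\gamma^1,\dots,x_\gamma^{m_\gamma}$. $F\subseteq\Omega$ is a finite set of cardinality $\kappa$ and $x=\sum_{\gamma\in F}\sum_{m=1}^{m_\gamma}c_{\gamma m}x_\gamma^m$ with $c_{\gamma m}\in\mathbb C$, where for each $\gamma\in F$ some $c_{\gamma m}\ne0$. $A:\mathcal X\to\mathbb C^S$ ($S\in\mathbb N$) is a linear operator and $B=\sum_{n=1}^N b_n\mathcal T(g_n)$ with $g_n\in\mathbb G$, $b_n\in\mathbb C\setminus\{0\}$; set $h(\gamma)=\sum_{n=1}^N b_n\gamma(g_n)$ for $\gamma\in\widehat{\mathbb G}$. The measurements are $y_\ell=AB^\ell x$, $\ell=0,1,2,\dots$. The polynomial $p_{\min}(z)=\sum_{\ell=0}^{\kappa M}\alpha_\ell z^\ell$ has coefficients satisfying $\alpha_{\kappa M}=1$ and $\sum_{\ell=0}^{\kappa M}\alpha_\ell y_{\ell+k}=0$ for all $k=0,1,2,\dots$; if such coefficients are not unique, one chooses those for which the largest possible number of initial coefficients vanish, $\alpha_0=\alpha_1=\dots=\alpha_j=0$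 with $j$ maximal. $R_{\min}$ denotes the set of non-zero roots of $p_{\min}$. The maximal Krylov subspace is $\mathcal K_\infty(B,x)=\mathrm{span}\{x,Bx,B^2x,\dots\}$. A spectral value $\gamma\in F$ is called observable if the restriction of $h$ to $\Omega$ is one-to-one, $0\notin h(\Omega)$, and $h(\gamma)\in R_{\min}$. *)

From HB Require Import structures.
From mathcomp Require Import all_boot all_order all_algebra.
From mathcomp Require Import all_classical all_reals all_analysis.
From mathcomp Require Import complex.

Set Implicit Arguments.
Unset Strict Implicit.
Unset Printing Implicit Defensive.

Import Order.TTheory GRing.Theory Num.Theory.
Import numFieldTopology.Exports.
Import numFieldNormedType.Exports.
Local Open Scope classical_set_scope.
Local Open Scope ring_scope.
Local Open Scope complex_scope.

Definition CC (R : realType) : numClosedFieldType := R[i].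

Section PointedGroup.
Variable G : topologicalZmodType.
Definition ptG : Type := G.
HB.instance Definition _ := Topological.on ptG.
HB.instance Definition _ := isPointed.Build ptG (0 : G).
End PointedGroup.

Notation borelT G := (g_sigma_algebraType (@open (ptG G))).

Definition haar_measure (R : realType) (G : topologicalZmodType)
  (mu : {measure set (borelT G) -> \bar R}) : Prop :=
  [/\ (0 < mu setT)%E,
      (forall (A : set (borelT G)) (g : G), measurable A ->
         mu [set (a : G) + g | a in (A : set G)] = mu A),
      (forall K : set G, compact K -> (mu K < +oo)%E),
      (forall A : set (borelT G), measurable A ->
         mu A = ereal_inf [set mu U | U in [set U : set G | open U /\ A `<=` U]]) &
      (forall U : set G, open U ->
         mu U = ereal_sup [set mu K | K in [set K : set G | compact K /\ K `<=` U]])].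

Definition cint (R : realType) d (T : measurableType d)
  (mu : {measure set T -> \bar R}) (f : T -> CC R) : CC R :=
  (Rintegral mu setT (fun t => complex.Re (f t)))%:C
  + 'i * (Rintegral mu setT (fun t => complex.Im (f t)))%:C.

Definition weight (R : realType) (G : topologicalZmodType) (w : G -> R) : Prop :=
  [/\ measurable_fun [set: borelT G] (w : borelT G -> R),
      (forall g : G, exists Mb : R, \forall y \near g, w y <= Mb),
      (forall g, w (- g) = w g),
      (forall g, 1 <= w g) &
      (forall g1 g2, w (g1 + g2) <= w g1 * w g2)].

Definition beurling_domar (R : realType) (G : topologicalZmodType) (w : G -> R) : Prop :=
  forall g : G, cvgn (series (fun n : nat => ln (w (g *+ n)) / (1 + (n%:R) ^+ 2))).

Definition character (R : realType) (G : topologicalZmodType) (gam : G -> CC R) : Prop :=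
  [/\ continuous gam,
      (forall a b, gam (a + b) = gam a * gam b) &
      (forall a, ComplexField.Normc.normc (gam a) = 1)].

Definition in_Lw (R : realType) (G : topologicalZmodType)
  (mu : {measure set (borelT G) -> \bar R}) (w : G -> R) (f : G -> CC R) : Prop :=
  [/\ measurable_fun [set: borelT G] (fun g : borelT G => complex.Re (f g)),
      measurable_fun [set: borelT G] (fun g : borelT G => complex.Im (f g)) &
      (\int[mu]_(g in [set: borelT G]) ((ComplexField.Normc.normc (f g) * w g)%:E) < +oo)%E].

Definition fhat (R : realType) (G : topologicalZmodType)
  (mu : {measure set (borelT G) -> \bar R}) (f : G -> CC R) (gam : G -> CC R) : CC R :=
  cint mu (fun g : borelT G => f g * gam (- g)).

Definition functional (R : realType) (X : normedModType (CC R)) (phi : X -> CC R) : Prop :=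
  (forall (a : CC R) (u v : X), phi (a *: u + v) = a * phi u + phi v) /\ continuous phi.

Definition representation (R : realType) (G : topologicalZmodType)
  (X : normedModType (CC R)) (w : G -> R) (T : G -> X -> X) : Prop :=
  [/\ (forall g (a : CC R) (u v : X), T g (a *: u + v) = a *: T g u + T g v),
      (forall u, T 0 u = u),
      (forall g1 g2 u, T (g1 + g2) u = T g1 (T g2 u)),
      (forall u, continuous (fun g : G => T g u)) &
      (forall g u, `|T g u| <= (w g)%:C * `|u|)].

(* f x = int f(g) T(-g) x dg  is zero.  The Bochner integral is not available;
   by Hahn-Banach, f x = 0 iff every continuous linear functional kills it,
   i.e. iff int f(g) phi(T(-g)x) dg = 0 for all such phi. *)
Definition act_zero (R : realType) (G : topologicalZmodType)
  (mu : {measure set (borelT G) -> \bar R}) (X : normedModType (CC R)) (T : G -> X -> X)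
  (f : G -> CC R) (x : X) : Prop :=
  forall phi : X -> CC R, functional phi ->
    cint mu (fun g : borelT G => f g * phi (T (- g) x)) = 0.

Definition beurling_spectrum (R : realType) (G : topologicalZmodType)
  (mu : {measure set (borelT G) -> \bar R}) (w : G -> R) (X : normedModType (CC R))
  (T : G -> X -> X) (N : set X) : set (G -> CC R) :=
  [set gam | character gam /\
     forall f, in_Lw mu w f -> fhat mu f gam != 0 ->
       exists2 y, N y & ~ act_zero mu T f y].

Definition spectral_subspace (R : realType) (G : topologicalZmodType)
  (mu : {measure set (borelT G) -> \bar R}) (w : G -> R) (X : normedModType (CC R))
  (T : G -> X -> X) (F : set (G -> CC R)) : set X :=
  [set y | beurling_spectrum mu w T [set y] `<=` F].

Definition eigen_subspace (R : realType) (G : topologicalZmodType)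
  (mu : {measure set (borelT G) -> \bar R}) (w : G -> R) (X : normedModType (CC R))
  (T : G -> X -> X) (gam : G -> CC R) : set X :=
  spectral_subspace mu w T [set gam].

Definition is_basis (R : realType) (X : normedModType (CC R)) (V : set X)
  (m : nat) (xb : nat -> X) : Prop :=
  [/\ (forall i, (i < m)%N -> V (xb i)),
      (forall c : nat -> CC R, \sum_(i < m) c i *: xb i = 0 ->
          forall i, (i < m)%N -> c i = 0) &
      (forall y, V y -> exists c : nat -> CC R, y = \sum_(i < m) c i *: xb i)].

Definition Bop (R : realType) (G : zmodType) (X : lmodType (CC R)) (T : G -> X -> X)
  (N : nat) (gs : 'I_N -> G) (bs : 'I_N -> CC R) (u : X) : X :=
  \sum_(n < N) bs n *: T (gs n) u.

Definition hfun (R : realType) (G : zmodType) (N : nat) (gs : 'I_N -> G)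
  (bs : 'I_N -> CC R) (gam : G -> CC R) : CC R :=
  \sum_(n < N) bs n * gam (gs n).

Definition krylov (R : realType) (X : lmodType (CC R)) (B : X -> X) (x : X) : set X :=
  [set v | exists (n : nat) (c : nat -> CC R), v = \sum_(i < n) c i *: iter i B x].

(* Coefficients alpha_0..alpha_K (K = kappa M) of a monic annihilator of the
   measurement sequence y. *)
Definition annihilating (R : realType) (S K : nat) (y : nat -> 'rV[CC R]_S)
  (alpha : nat -> CC R) : Prop :=
  alpha K = 1 /\ forall k : nat, \sum_(l < K.+1) alpha l *: y (l + k)%N = 0.

(* The choice made for p_min: among annihilating coefficient vectors, one with the
   largest number of vanishing initial coefficients. *)
Definition pmin_coeffs (R : realType) (S K : nat) (y : nat -> 'rV[CC R]_S)
  (alpha : nat -> CC R) : Prop :=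
  annihilating K y alpha /\
  forall alpha' : nat -> CC R, annihilating K y alpha' ->
    forall j : nat, (forall i, (i <= j)%N -> alpha' i = 0) ->
      (forall i, (i <= j)%N -> alpha i = 0).

Definition pmin (R : realType) (K : nat) (alpha : nat -> CC R) : {poly (CC R)} :=
  \poly_(i < K.+1) alpha i.

Definition Rmin (R : realType) (K : nat) (alpha : nat -> CC R) : set (CC R) :=
  [set z | z != 0 /\ root (pmin K alpha) z].

Definition observable (R : realType) (G : Type) (Omega : set (G -> CC R))
  (h : (G -> CC R) -> CC R) (Rm : set (CC R)) (gam : G -> CC R) : Prop :=
  [/\ (forall a b, Omega a -> Omega b -> h a = h b -> a = b),
      ~ (exists a, Omega a /\ h a = 0) &
      Rm (h gam)].

From HB Require Import structures.
From mathcomp Require Import all_boot all_order all_algebra.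
From mathcomp Require Import all_classical all_reals all_analysis.
From mathcomp Require Import complex.
Set Implicit Arguments.
Unset Strict Implicit.
Unset Printing Implicit Defensive.

Import Order.TTheory GRing.Theory Num.Theory.
Import numFieldTopology.Exports.
Import numFieldNormedType.Exports.
Local Open Scope classical_set_scope.
Local Open Scope ring_scope.

(* If [v] is an eigenvector of [B] for the eigenvalue [lam], then
   [A p_min(B) v = p_min(lam) A v].  The linear map [u |-> A p_min(B) u]
   vanishes on every [B^k x] because [alpha] annihilates the measurements,
   hence on the whole Krylov space; as [A v != 0], [lam] is a root of [p_min].
   It is non-zero because [gam] lies in [Omega]. *)

Section LinearIterates.
Variables (K : pzRingType) (X : lmodType K) (B : X -> X).
Hypothesis B_lin : linear B.
HB.instance Definition _ := GRing.isLinear.Build K X X *:%R B B_lin.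

Lemma iter_linear n : linear (iter n B).
Proof. by elim: n => [//|n IHn] a u v /=; rewrite IHn linearP. Qed.

Lemma iter_eigenvector (lam : K) (v : X) n :
  B v = lam *: v -> iter n B v = lam ^+ n *: v.
Proof.
move=> Bv; elim: n => [|n IHn] /=; first by rewrite scale1r.
by rewrite IHn linearZ /= Bv scalerA -exprSr.
Qed.

End LinearIterates.

Lemma Bop_linear (R : realType) (G : zmodType) (X : lmodType (CC R))
    (T : G -> X -> X) (N : nat) (gs : 'I_N -> G) (bs : 'I_N -> CC R) :
  (forall g, linear (T g)) -> linear (Bop T gs bs).
Proof.
move=> T_lin a u v; rewrite /Bop scaler_sumr -big_split /=.
by apply: eq_bigr => n _; rewrite T_lin scalerDr !scalerA mulrC.
Qed.

Lemma krylov_sub_kernel (R : realType) (X W : lmodType (CC R))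
    (B : X -> X) (x : X) (P : X -> W) :
  linear P -> (forall k, P (iter k B x) = 0) -> krylov B x `<=` [set v | P v = 0].
Proof.
move=> P_lin PBx v [n [c ->]] /=.
pose PL : {linear X -> W} := HB.pack P (GRing.isLinear.Build _ _ _ _ P P_lin).
rewrite [P _](linear_sum PL); apply: big1 => i _.
by rewrite [PL _]linearZ /= PBx scaler0.
Qed.

Section MinimalPolynomialRoot.
Variables (R : realType) (X : lmodType (CC R)) (S : nat).
Variables (A : X -> 'rV[CC R]_S) (B : X -> X) (x : X) (K : nat) (alpha : nat -> CC R).
Hypotheses (A_lin : linear A) (B_lin : linear B).
Hypothesis alpha_ann : annihilating K (fun l => A (iter l B x)) alpha.
HB.instance Definition _ := GRing.isLinear.Build _ X _ *:%R A A_lin.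

Definition pmin_meas (u : X) : 'rV[CC R]_S :=
  \sum_(l < K.+1) alpha l *: A (iter l B u).

Lemma pmin_meas_linear : linear pmin_meas.
Proof.
move=> a u v; rewrite /pmin_meas scaler_sumr -big_split /=.
by apply: eq_bigr => l _; rewrite (iter_linear B_lin) linearP scalerDr !scalerA mulrC.
Qed.

Lemma pmin_meas_iter k : pmin_meas (iter k B x) = 0.
Proof.
have [_ ann] := alpha_ann; rewrite -(ann k).
by apply: eq_bigr => l _; rewrite -iterD.
Qed.

Lemma pmin_meas_eigenvector (lam : CC R) (v : X) :
  B v = lam *: v -> pmin_meas v = (pmin K alpha).[lam] *: A v.
Proof.
move=> Bv; rewrite /pmin_meas horner_poly scaler_suml.
by apply: eq_bigr => l _; rewrite (iter_eigenvector B_lin _ Bv) linearZ scalerA.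
Qed.

Lemma root_pmin_krylov_eigenvector (lam : CC R) (v : X) :
  krylov B x v -> B v = lam *: v -> A v != 0 -> root (pmin K alpha) lam.
Proof.
move=> v_K Bv Av_nz.
have : pmin_meas v = 0 := krylov_sub_kernel pmin_meas_linear pmin_meas_iter v_K.
by rewrite (pmin_meas_eigenvector Bv) => /eqP; rewrite scaler_eq0 (negbTE Av_nz) orbF.
Qed.

End MinimalPolynomialRoot.

Theorem proposition2p3
  (R : realType) (G : topologicalZmodType)
  (G_lc : locally_compact [set: G]) (G_T2 : hausdorff_space G)
  (mu : {measure set (borelT G) -> \bar R}) (mu_haar : haar_measure mu)
  (w : G -> R) (w_weight : weight w) (w_BD : beurling_domar w)
  (X : completeNormedModType (CC R)) (T : G -> X -> X)
  (T_rep : representation w T)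
  (nondeg : forall u : X, (forall f, in_Lw mu w f -> act_zero mu T f u) -> u = 0)
  (Omega : set (G -> CC R)) (M kappa : nat) (M_pos : (0 < M)%N) (kappa_pos : (0 < kappa)%N)
  (mdim : (G -> CC R) -> nat) (xb : (G -> CC R) -> nat -> X)
  (HOmega : forall gam, Omega gam ->
     [/\ character gam, (mdim gam <= M)%N &
         is_basis (eigen_subspace mu w T gam) (mdim gam) (xb gam)])
  (Fi : 'I_kappa -> (G -> CC R)) (Fi_inj : injective Fi)
  (Fi_Omega : forall i, Omega (Fi i))
  (c : 'I_kappa -> nat -> CC R)
  (c_nz : forall i, exists2 j, (j < mdim (Fi i))%N & c i j != 0)
  (x : X) (x_def : x = \sum_(i < kappa) \sum_(j < mdim (Fi i)) c i j *: xb (Fi i) j)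
  (S : nat) (A : X -> 'rV[CC R]_S)
  (A_lin : forall (a : CC R) (u v : X), A (a *: u + v) = a *: A u + A v)
  (N : nat) (gs : 'I_N -> G) (bs : 'I_N -> CC R) (bs_nz : forall n, bs n != 0)
  (alpha : nat -> CC R)
  (Halpha : pmin_coeffs (kappa * M) (fun l : nat => A (iter l (Bop T gs bs) x)) alpha)
  (h_inj : forall a b, Omega a -> Omega b -> hfun gs bs a = hfun gs bs b -> a = b)
  (h_nz : ~ (exists a, Omega a /\ hfun gs bs a = 0))
  (gam : G -> CC R) (gam_F : exists i, Fi i = gam)
  (v : X) (v_nz : v != 0) (v_K : krylov (Bop T gs bs) x v)
  (v_eig : Bop T gs bs v = hfun gs bs gam *: v) (Av_nz : A v != 0) :
  observable Omega (hfun gs bs) (Rmin (kappa * M) alpha) gam.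
Proof.
have [i iE] := gam_F; subst gam.
have [T_lin _ _ _ _] := T_rep.
have B_lin : linear (Bop T gs bs) by apply: Bop_linear => g; apply: T_lin.
have [alpha_ann _] := Halpha.
split=> //; split.
- by apply/eqP => h0; apply: h_nz; exists (Fi i).
- by have := root_pmin_krylov_eigenvector A_lin B_lin alpha_ann v_K v_eig Av_nz.
Qed.
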